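(* Let $R$ be an associative ring with identity and involution $*$, and let $a\in R^{\#}\cap R^{\dagger}$. Then $a\in R^{SEP}$ if and only if $a(a^{\#})^*a^{\dagger}$ is a left $a^{\dagger}a^2$-idempotent, i.e. $(a(a^{\#})^*a^{\dagger})^2=a^{\dagger}a^2\,a(a^{\#})^*a^{\dagger}$.
   Context: An involution on $R$ is a map $x\mapsto x^*$ with $(x^* )^*=x$, $(x+y)^*=x^*+y^*$, $(xy)^*=y^*x^*$. An element $a$ is Moore–Penrose invertible if there is $b$ with $aba=a$, $bab=b$, $(ab)^*=ab$, $(ba)^*=ba$; such $b$ is unique, denoted $a^{\dagger}$, and $R^{\dagger}$ is the set of such $a$. An element $a$ is group invertible if there is $b$ with $aba=a$, $bab=b$, $ab=ba$; such $b$ is unique, denoted $a^{\#}$, and $R^{\#}$ is the set of such $a$. For $a\in R^{\#}\cap R^{\dagger}$, $a$ is SEP if $a^*=a^{\dagger}=a^{\#}$; $R^{SEP}$ denotes the set of SEP elements. For $e,c\in R$, $e$ is a left $c$-idempotent if $e^2=ce$, and a right $c$-idempotent if $e^2=ec$. *)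

From mathcomp Require Import all_boot all_algebra.
Set Implicit Arguments. Unset Strict Implicit. Unset Printing Implicit Defensive.
Import GRing.Theory.
Local Open Scope ring_scope.

Definition is_involution (R : pzRingType) (inv : R -> R) : Prop :=
  [/\ forall x, inv (inv x) = x,
      forall x y, inv (x + y) = inv x + inv y
    & forall x y, inv (x * y) = inv y * inv x].

Definition is_MP_inverse (R : pzRingType) (inv : R -> R) (a b : R) : Prop :=
  [/\ a * b * a = a, b * a * b = b, inv (a * b) = a * b & inv (b * a) = b * a].

Definition is_group_inverse (R : pzRingType) (a b : R) : Prop :=
  [/\ a * b * a = a, b * a * b = b & a * b = b * a].

Definition MP_invertible (R : pzRingType) (inv : R -> R) (a : R) : Prop :=
  exists b, is_MP_inverse inv a b.

Definition group_invertible (R : pzRingType) (a : R) : Prop :=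
  exists b, is_group_inverse a b.

Definition is_SEP (R : pzRingType) (inv : R -> R) (a : R) : Prop :=
  exists d g, [/\ is_MP_inverse inv a d, is_group_inverse a g,
                  inv a = d & d = g].

Definition left_c_idempotent (R : pzRingType) (c e : R) : Prop :=
  e * e = c * e.

From mathcomp Require Import all_boot all_algebra.
From Stdlib Require Import Setoid.
Local Open Scope ring_scope.
Import GRing.Theory.

(* Since inverses are unique, a is SEP exactly when a^* = a^#; then
   e := a (a^#)^* a^dagger = a and a^dagger a^2 = a, so e^2 = a^dagger a^2 e.
   Conversely, right-multiplying e^2 = a^dagger a^2 e by a a^* gives
   a (a^#)^* = a^dagger a^3 (a^#)^* a^*.  From it one gets a^dagger a^2 = a, so
   a^# a = a^dagger a is hermitian, and then
   (a^#)^* = a^# a (a^#)^* = a (a^#)^* a^* = a a^# a = a. *)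

(* [arw H] rewrites with [H : u = v] modulo associativity: the goal is kept
   right-nested, and [u] is matched as a suffix of a product, or through
   [u * t = v * t] anywhere inside it. *)
Ltac arw H :=
  lazymatch type of H with @eq ?T ?u ?v =>
    let Hs := fresh in let Hp := fresh in
    pose proof H as Hs;
    assert (Hp : forall t : T, u * t = v * t)
      by exact: (fun t => congr1 (fun w => w * t) H);
    rewrite -?mulrA in Hs; repeat setoid_rewrite <- mulrA in Hp;
    rewrite -?mulrA; first [rewrite Hp | rewrite Hs]; rewrite -?mulrA;
    clear Hs Hp
  end.

Lemma group_inverse_uniq (R : pzRingType) (a x y : R) :
  is_group_inverse a x -> is_group_inverse a y -> x = y.
Proof.
case=> axa xax ax; case=> aya yay ay.
have xxa : x * x * a = x by arw (esym ax); arw xax.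
have ayy : a * y * y = y by arw ay; arw yay.
have -> : x = x * a * y.
  transitivity (x * x * (a * y * a)); first by arw aya; arw xxa.
  by arw (esym ay); arw xxa.
transitivity (a * x * a * y * y); first by arw ayy; arw ax.
by arw axa; arw ayy.
Qed.

Lemma MP_inverse_uniq (R : pzRingType) (inv : R -> R) (a x y : R) :
  (forall u v, inv (u * v) = inv v * inv u) ->
  is_MP_inverse inv a x -> is_MP_inverse inv a y -> x = y.
Proof.
move=> invM [axa xax iax ixa] [aya yay iay iya].
(* x = x (a y a x)^* = x a x a y  and  y = (y a x a)^* y = x a y a y *)
have -> : x = x * a * y.
  transitivity (x * inv (a * y * (a * x))); first by arw aya; rewrite iax; arw xax.
  by rewrite invM iax iay; arw xax.
transitivity (inv (y * a * (x * a)) * y); first by rewrite invM ixa iya; arw yay.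
by arw axa; rewrite iya; arw yay.
Qed.

Section SEPCharacterization.
Variables (R : pzRingType) (inv : R -> R) (a g d : R).
Hypotheses (invK : forall x, inv (inv x) = x)
           (invM : forall x y, inv (x * y) = inv y * inv x).
Hypotheses (aga : a * g * a = a) (gag : g * a * g = g) (agC : a * g = g * a).
Hypotheses (ada : a * d * a = a) (dad : d * a * d = d)
           (iad : inv (a * d) = a * d) (ida : inv (d * a) = d * a).

Let aag : a * a * g = a. Proof. by arw agC; arw aga. Qed.
Let gaa : g * a * a = a. Proof. by arw (esym agC); arw aga. Qed.
Let agg : a * g * g = g. Proof. by arw agC; arw gag. Qed.
Let gga : g * g * a = g. Proof. by arw (esym agC); arw gag. Qed.

Lemma group_inverse_is_MP : inv a = g -> is_MP_inverse inv a g.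
Proof.
move=> ia; have ig : inv g = a by rewrite -ia invK.
by split=> //; rewrite invM ia ig // agC.
Qed.

Lemma SEP_iff_adjoint_group_inverse : is_SEP inv a <-> inv a = g.
Proof.
split=> [[d' [g' [_ Hg' <- ->]]] | ia].
  exact: group_inverse_uniq Hg' _.
by exists g, g; split=> //; apply: group_inverse_is_MP.
Qed.

Lemma adjoint_group_inverse_left_c_idempotent :
  inv a = g -> left_c_idempotent (d * a ^+ 2) (a * inv g * d).
Proof.
move=> ia; have ig : inv g = a by rewrite -ia invK.
have -> : d = g.
  exact: MP_inverse_uniq invM (And4 ada dad iad ida) (group_inverse_is_MP ia).
by rewrite /left_c_idempotent ig expr2; arw aag; arw gaa.
Qed.

Lemma left_c_idempotent_mulr :
  left_c_idempotent (d * a ^+ 2) (a * inv g * d) ->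
  a * inv g = d * a * a * a * inv g * inv a.
Proof.
rewrite /left_c_idempotent expr2 => idem.
have gda : g * d * a = g by arw (esym gga); arw ada; arw gga.
have da_ig : d * a * inv g = inv g by rewrite -{2}gda -[g * d * a]mulrA invM ida.
have da_ia : d * a * inv a = inv a by rewrite -{3}ada -[a * d * a]mulrA invM ida.
have ig_ia : inv g * inv g * inv a = inv g by rewrite -{3}agg !invM mulrA.
transitivity (a * inv g * d * (a * inv g * d) * a * inv a).
  by arw da_ig; arw da_ia; arw ig_ia.
by rewrite idem; arw da_ia.
Qed.

Lemma adjoint_group_inverse_eq :
  a * inv g = d * a * a * a * inv g * inv a -> inv g = a.
Proof.
move=> a_ig_daaa.
have a_ig_aa : a * inv g = a * a * inv g * inv a.
  transitivity (g * a * (a * inv g)); first by arw gaa.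
  by rewrite {1}a_ig_daaa; arw ada; arw gaa.
have a_ig_da : a * inv g = d * a * a * inv g.
  by rewrite {1}a_ig_daaa; arw (esym a_ig_aa).
have ig_ia : inv g * inv a * inv a = inv a by rewrite -{3}aag !invM mulrA.
have a_ia : a * inv a * inv d = a by rewrite -mulrA -invM ida mulrA ada.
have daa : d * a * a = a.
  transitivity (d * a * a * inv g * inv a * inv a * inv d); last rewrite -a_ig_da;
    by arw ig_ia; arw a_ia.
have ga_da : g * a = d * a by rewrite -agC -{1}daa; arw aag.
have gaH : inv (g * a) = g * a by rewrite ga_da ida.
have igia : inv g * inv a = g * a by rewrite -invM agC gaH.
rewrite -{1}gag -[g * a * g]mulrA invM agC gaH -mulrA a_ig_aa.
by arw gaa; rewrite igia; arw aga.
Qed.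

Lemma SEP_iff_left_c_idempotent :
  is_SEP inv a <-> left_c_idempotent (d * a ^+ 2) (a * inv g * d).
Proof.
rewrite SEP_iff_adjoint_group_inverse.
split=> [|/left_c_idempotent_mulr/adjoint_group_inverse_eq ig].
  exact: adjoint_group_inverse_left_c_idempotent.
by rewrite -ig invK.
Qed.

End SEPCharacterization.

Theorem theorem3p2 (R : pzRingType) (inv : R -> R) (a g d : R) :
  is_involution inv ->
  is_group_inverse a g ->
  is_MP_inverse inv a d ->
  is_SEP inv a <->
  left_c_idempotent (d * (a ^+ 2)) (a * inv g * d).
Proof.
case=> invK _ invM [aga gag agC] [ada dad iad ida].
exact: SEP_iff_left_c_idempotent.
Qed.
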